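(* If $\mathfrak{g}$ is a product by generators, then $\dim\mathfrak{g}\ge 10$.
   Context: All Lie algebras are finite-dimensional, complex, nilpotent and nonabelian. Product by generators of two algebras $\mathfrak{g}_1,\mathfrak{g}_2$: take bases $\{X_1,\dots,X_{m_1}\}$, $\{X'_1,\dots,X'_{m_2}\}$ such that $X_1,\dots,X_{n_1}$ generate $\mathfrak{g}_1$ and $X_{n_1+1},\dots,X_{m_1}$ span $[\mathfrak{g}_1,\mathfrak{g}_1]$, and similarly for $\mathfrak{g}_2$ with $n_2$ generators; $\mathfrak{g}_1\underline{\times}\mathfrak{g}_2$ is the Lie algebra on $\mathfrak{g}_1\oplus\mathfrak{g}_2\oplus\langle Z_1,\dots,Z_{n_1n_2}\rangle$ with the brackets of $\mathfrak{g}_1$ and of $\mathfrak{g}_2$, $[X_i,X'_j]=Z_{(i-1)n_2+j}$ for $i\le n_1$, $j\le n_2$, $[X_i,X'_j]=0$ otherwise, and the $Z_k$ central. A nilpotent Lie algebra $\mathfrak{g}$ is a product by generators if there exist (nonabelian) subalgebras $\mathfrak{h}_1,\mathfrak{h}_2$ with $\mathfrak{g}\cong\mathfrak{h}_1\underline{\times}\mathfrak{h}_2$. *)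

(* Lie algebras over the complex algebraic numbers algC,
   realized concretely on coordinate spaces 'rV[algC]_n with a bracket. *)
From mathcomp Require Import all_boot all_order all_algebra all_field.
Set Implicit Arguments. Unset Strict Implicit. Unset Printing Implicit Defensive.
Import GRing.Theory Num.Theory.
Local Open Scope ring_scope.

Section LieDefs.
Variable F : fieldType.

Definition is_lie (n : nat) (br : 'rV[F]_n -> 'rV[F]_n -> 'rV[F]_n) : Prop :=
  [/\ (forall a x y z, br (a *: x + y) z = a *: br x z + br y z),
      (forall a x y z, br z (a *: x + y) = a *: br z x + br z y),
      (forall x, br x x = 0) &
      (forall x y z, br x (br y z) + br y (br z x) + br z (br x y) = 0)].

Definition lie_nilpotent (n : nat) (br : 'rV[F]_n -> 'rV[F]_n -> 'rV[F]_n) : Prop :=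
  exists k : nat, forall (xs : seq 'rV[F]_n) (y : 'rV[F]_n),
    size xs = k -> foldr br y xs = 0.

Definition lie_nonabelian (n : nat) (br : 'rV[F]_n -> 'rV[F]_n -> 'rV[F]_n) : Prop :=
  exists x y, br x y != 0.

Definition br_closed (n : nat) (br : 'rV[F]_n -> 'rV[F]_n -> 'rV[F]_n)
  (V : 'M[F]_n) : Prop :=
  forall x y, (x <= V)%MS -> (y <= V)%MS -> (br x y <= V)%MS.

Definition is_derived (n : nat) (br : 'rV[F]_n -> 'rV[F]_n -> 'rV[F]_n)
  (D : 'M[F]_n) : Prop :=
  (forall x y, (br x y <= D)%MS) /\
  (forall W : 'M[F]_n, (forall x y, (br x y <= W)%MS) -> (D <= W)%MS).

Definition adapted_basis (m : nat) (br : 'rV[F]_m -> 'rV[F]_m -> 'rV[F]_m)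
  (B : 'M[F]_m) (k : nat) : Prop :=
  [/\ B \in unitmx, (k <= m)%N,
      (forall V : 'M[F]_m, (forall i : 'I_m, (i < k)%N -> (row i B <= V)%MS) ->
          br_closed br V -> (1%:M <= V)%MS) &
      is_derived br (\sum_(i < m | (k <= i)%N) <<row i B>>)%MS].

Definition br_of_sc (N : nat) (c : 'I_N -> 'I_N -> 'rV[F]_N)
  (x y : 'rV[F]_N) : 'rV[F]_N :=
  \sum_(k < N) \sum_(l < N) (x 0 k * y 0 l) *: c k l.

Section Product.
Variables (m1 m2 n1 n2 : nat).
Variables (br1 : 'rV[F]_m1 -> 'rV[F]_m1 -> 'rV[F]_m1)
          (br2 : 'rV[F]_m2 -> 'rV[F]_m2 -> 'rV[F]_m2)
          (B1 : 'M[F]_m1) (B2 : 'M[F]_m2).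

Local Notation N := (m1 + m2 + n1 * n2)%N.

(* Standard basis of F^N, in order: X_1..X_m1, X'_1..X'_m2, Z_1..Z_(n1 n2). *)
Definition emb1 (v : 'rV[F]_m1) : 'rV[F]_N := row_mx (row_mx v 0) 0.
Definition emb2 (v : 'rV[F]_m2) : 'rV[F]_N := row_mx (row_mx 0 v) 0.
Definition embZ (v : 'rV[F]_(n1 * n2)) : 'rV[F]_N := row_mx 0 v.

(* Z_{(i-1) n2 + j} (1-indexed) = mxvec index i * n2 + j (0-indexed). *)
Definition Zvec (i j : nat) : 'rV[F]_N :=
  embZ (mxvec (\matrix_(a < n1, b < n2) ((((a : nat) == i) && ((b : nat) == j))%:R : F))).

(* [X_i, X'_j] = Z_{ij} if i <= n1 and j <= n2, else 0. *)
Definition mixed_br (i : 'I_m1) (j : 'I_m2) : 'rV[F]_N :=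
  if ((i < n1) && (j < n2))%N then Zvec i j else 0.

Definition prod_sc (k l : 'I_N) : 'rV[F]_N :=
  match split k, split l with
  | inl k', inl l' =>
    match split k', split l' with
    | inl i, inl i' => emb1 (br1 (row i B1) (row i' B1) *m invmx B1)
    | inr j, inr j' => emb2 (br2 (row j B2) (row j' B2) *m invmx B2)
    | inl i, inr j => mixed_br i j
    | inr j, inl i => - mixed_br i j
    end
  | _, _ => 0
  end.

Definition prod_gen_br : 'rV[F]_N -> 'rV[F]_N -> 'rV[F]_N := br_of_sc prod_sc.
End Product.

Definition lie_iso (n n' : nat) (br : 'rV[F]_n -> 'rV[F]_n -> 'rV[F]_n)
  (br' : 'rV[F]_n' -> 'rV[F]_n' -> 'rV[F]_n') : Prop :=
  exists f : 'M[F]_(n, n'), [/\ row_free f, row_full f &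
    forall x y, br x y *m f = br' (x *m f) (y *m f)].

Definition product_by_generators (n : nat)
  (br : 'rV[F]_n -> 'rV[F]_n -> 'rV[F]_n) : Prop :=
  exists (m1 m2 n1 n2 : nat)
         (br1 : 'rV[F]_m1 -> 'rV[F]_m1 -> 'rV[F]_m1)
         (br2 : 'rV[F]_m2 -> 'rV[F]_m2 -> 'rV[F]_m2)
         (B1 : 'M[F]_m1) (B2 : 'M[F]_m2),
    [/\ is_lie br1, lie_nilpotent br1, lie_nonabelian br1 & adapted_basis br1 B1 n1] /\
    [/\ is_lie br2, lie_nilpotent br2, lie_nonabelian br2 & adapted_basis br2 B2 n2] /\
    lie_iso br (@prod_gen_br m1 m2 n1 n2 br1 br2 B1 B2).
End LieDefs.

From mathcomp Require Import all_boot all_order all_algebra all_field.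
From mathcomp Require Import zify.
Set Implicit Arguments. Unset Strict Implicit. Unset Printing Implicit Defensive.
Import GRing.Theory.
Local Open Scope ring_scope.

(* A factor g_i of dimension m_i with n_i generators satisfies 2 <= n_i < m_i:
   [g_i, g_i] <> 0 is spanned by the last m_i - n_i basis vectors, and a line is
   always a subalgebra, so at most one generator would generate at most a line,
   which is abelian. Hence dim = m_1 + m_2 + n_1 n_2 >= 3 + 3 + 2 * 2. *)

Section AdaptedBasis.
Variables (F : fieldType) (n : nat) (br : 'rV[F]_n -> 'rV[F]_n -> 'rV[F]_n).

Lemma lie_br0l : is_lie br -> forall z, br 0 z = 0.
Proof.
move=> [linl _ _ _] z; apply/(addrI (br 0 z)); rewrite addr0.
by have := linl 1 0 0 z; rewrite !scale1r (addr0 (0 : 'rV[F]_n)) => /esym.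
Qed.

Lemma lie_br0r : is_lie br -> forall z, br z 0 = 0.
Proof.
move=> [_ linr _ _] z; apply/(addrI (br z 0)); rewrite addr0.
by have := linr 1 0 0 z; rewrite !scale1r (addr0 (0 : 'rV[F]_n)) => /esym.
Qed.

Lemma lie_brZZ : is_lie br -> forall a b v, br (a *: v) (b *: v) = 0.
Proof.
move=> Hlie a b v; have [linl linr alt _] := Hlie.
have := linl a v 0 (b *: v); rewrite (addr0 (a *: v : 'rV[F]_n)) => ->.
have := linr b v 0 v; rewrite (addr0 (b *: v : 'rV[F]_n)) => ->.
by rewrite alt lie_br0l // lie_br0r // !addr0 !scaler0.
Qed.

Lemma br_closed_line (v : 'rV[F]_n) : is_lie br -> br_closed br <<v>>%MS.
Proof.
move=> Hlie x y; rewrite !genmxE => /sub_rVP [a ->] /sub_rVP [b ->].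
by rewrite lie_brZZ // sub0mx.
Qed.

Variable B : 'M[F]_n.

Lemma adapted_basis_rank (k : nat) (V : 'M[F]_n) :
    adapted_basis br B k -> br_closed br V ->
    (forall i : 'I_n, (i < k)%N -> (row i B <= V)%MS) -> (n <= \rank V)%N.
Proof.
by move=> [_ _ gen _] closedV genV; rewrite -{1}(mxrank1 F n) mxrankS ?gen.
Qed.

Lemma adapted_basis_gen_lt (k : nat) : lie_nonabelian br -> adapted_basis br B k -> (k < n)%N.
Proof.
move=> [x [y brxy_neq0]] [_ le_kn _ [derived _]].
rewrite ltn_neqAle le_kn andbT; apply: contra brxy_neq0 => /eqP def_k.
have := derived x y; rewrite big_pred0 ?submx0 // => i.
by apply/negbTE; rewrite -ltnNge def_k.
Qed.

Lemma adapted_basis_gen_ge2 (k : nat) :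
  is_lie br -> lie_nonabelian br -> adapted_basis br B k -> (2 <= k)%N.
Proof.
move=> Hlie Hnab Hadapt; have lt_kn := adapted_basis_gen_lt Hnab Hadapt.
case: k lt_kn Hadapt => [|[|//]] lt_kn Hadapt.
- have := adapted_basis_rank Hadapt (br_closed_line (v := 0) Hlie) (fun _ => ltac:(done)).
  by rewrite genmx0 mxrank0; lia.
- set v := row (Ordinal (ltnW lt_kn)) B.
  have genV (i : 'I_n) : (i < 1)%N -> (row i B <= <<v>>)%MS.
    rewrite ltnS leqn0 genmxE => /eqP i0.
    by have -> : i = Ordinal (ltnW lt_kn) by apply: val_inj.
  have := adapted_basis_rank Hadapt (br_closed_line (v := v) Hlie) genV.
  by rewrite genmxE; have := rank_leq_row v; lia.
Qed.

End AdaptedBasis.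

Lemma lie_iso_dim (F : fieldType) (n n' : nat)
    (br : 'rV[F]_n -> 'rV[F]_n -> 'rV[F]_n) (br' : 'rV[F]_n' -> 'rV[F]_n' -> 'rV[F]_n') :
  lie_iso br br' -> n = n'.
Proof. by move=> [f [/eqP free_f /eqP full_f _]]; rewrite -free_f full_f. Qed.

Lemma product_dim_ge10 (m1 m2 n1 n2 : nat) :
  (2 <= n1 < m1)%N -> (2 <= n2 < m2)%N -> (10 <= m1 + m2 + n1 * n2)%N.
Proof.
move=> /andP [n1_ge2 n1_lt] /andP [n2_ge2 n2_lt].
rewrite (_ : 10 = 3 + 3 + 2 * 2)%N // !leq_add ?leq_mul //.
- exact: leq_ltn_trans n1_ge2 n1_lt.
- exact: leq_ltn_trans n2_ge2 n2_lt.
Qed.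

Theorem mainTheorem7 (n : nat) (br : 'rV[algC]_n -> 'rV[algC]_n -> 'rV[algC]_n) :
  is_lie br -> lie_nilpotent br -> lie_nonabelian br ->
  product_by_generators br -> (10 <= n)%N.
Proof.
move=> _ _ _ [m1 [m2 [n1 [n2 [br1 [br2 [B1 [B2 [g1 [g2 iso]]]]]]]]]].
have [Hlie1 _ Hnab1 Hadapt1] := g1; have [Hlie2 _ Hnab2 Hadapt2] := g2.
rewrite (lie_iso_dim iso) product_dim_ge10 //; apply/andP; split.
- exact: adapted_basis_gen_ge2 Hlie1 Hnab1 Hadapt1.
- exact: adapted_basis_gen_lt Hnab1 Hadapt1.
- exact: adapted_basis_gen_ge2 Hlie2 Hnab2 Hadapt2.
- exact: adapted_basis_gen_lt Hnab2 Hadapt2.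
Qed.
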